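(* Let $k_0\in\mathbb{R}$, let $w\in C^2(\mathbb{R})$ be real-valued with $\lim_{x\to\pm\infty}w(x)=\mp k_0$ and $\lim_{x\to\pm\infty}w'(x)=0$, and $U=-w^2-iw'+k_0^2$. Let $k_\star\in\mathbb{R}\setminus\{0,\pm k_0\}$ and $\rho_\star>0$. Suppose $\psi_{\rm las}$ and $\psi_{\rm CPA}$ are solutions of $-\psi''+U\psi=k_\star^2\psi$ such that, together with their first derivatives, $$\psi_{\rm las}(x)\sim a_\pm e^{\pm ik_\star x},\qquad \psi_{\rm CPA}(x)\sim c_\pm e^{\mp ik_\star x}\qquad (x\to\pm\infty),$$ with $|a_+|=|a_-|=|c_+|=|c_-|=\rho_\star$. Then for all $x\in\mathbb{R}$, $$|\psi_{\rm CPA}(x)|^2+|\psi_{\rm las}(x)|^2+\frac{k_0}{k_\star}\big(|\psi_{\rm las}(x)|^2-|\psi_{\rm CPA}(x)|^2\big)=2\rho_\star^2.$$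
   Context: ''$f(x)\sim a e^{i\kappa x}$ together with the first derivative'' means $f(x)-ae^{i\kappa x}\to0$ and $f'(x)-i\kappa a e^{i\kappa x}\to0$. Such $\psi_{\rm las},\psi_{\rm CPA}$ are the laser (outgoing) and coherent-perfect-absorber (incoming) solutions at a self-dual spectral singularity $k_\star$. *)

From Stdlib Require Import Reals Lra.
Open Scope R_scope.

Definition Cplx := (R * R)%type.
Definition Cre (z : Cplx) : R := fst z.
Definition Cim (z : Cplx) : R := snd z.
Definition Cadd (z w : Cplx) : Cplx := (Cre z + Cre w, Cim z + Cim w).
Definition Csub (z w : Cplx) : Cplx := (Cre z - Cre w, Cim z - Cim w).
Definition Cmul (z w : Cplx) : Cplx :=
  (Cre z * Cre w - Cim z * Cim w, Cre z * Cim w + Cim z * Cre w).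
Definition RtoC (r : R) : Cplx := (r, 0).
Definition Ci : Cplx := (0, 1).
Definition Cnorm2 (z : Cplx) : R := Cre z ^ 2 + Cim z ^ 2.
Definition Cnorm (z : Cplx) : R := sqrt (Cnorm2 z).
Definition Cexpi (t : R) : Cplx := (cos t, sin t).

Definition Cderiv_lim (f : R -> Cplx) (x : R) (l : Cplx) : Prop :=
  derivable_pt_lim (fun t => Cre (f t)) x (Cre l) /\
  derivable_pt_lim (fun t => Cim (f t)) x (Cim l).

Definition Rlim_pinf (f : R -> R) (l : R) : Prop :=
  forall eps, 0 < eps -> exists M, forall x, M < x -> Rabs (f x - l) < eps.
Definition Rlim_minf (f : R -> R) (l : R) : Prop :=
  forall eps, 0 < eps -> exists M, forall x, x < M -> Rabs (f x - l) < eps.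
Definition Czero_pinf (g : R -> Cplx) : Prop :=
  forall eps, 0 < eps -> exists M, forall x, M < x -> Cnorm (g x) < eps.
Definition Czero_minf (g : R -> Cplx) : Prop :=
  forall eps, 0 < eps -> exists M, forall x, x < M -> Cnorm (g x) < eps.

Definition asym_pinf (f f' : R -> Cplx) (a : Cplx) (kappa : R) : Prop :=
  Czero_pinf (fun x => Csub (f x) (Cmul a (Cexpi (kappa * x)))) /\
  Czero_pinf (fun x => Csub (f' x) (Cmul (Cmul Ci (RtoC kappa)) (Cmul a (Cexpi (kappa * x))))).
Definition asym_minf (f f' : R -> Cplx) (a : Cplx) (kappa : R) : Prop :=
  Czero_minf (fun x => Csub (f x) (Cmul a (Cexpi (kappa * x)))) /\
  Czero_minf (fun x => Csub (f' x) (Cmul (Cmul Ci (RtoC kappa)) (Cmul a (Cexpi (kappa * x))))).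

(* the potential U = -w^2 - i w' + k0^2, with w1 = w' *)
Definition Upot (k0 : R) (w w1 : R -> R) (x : R) : Cplx :=
  (k0 ^ 2 - (w x) ^ 2, - w1 x).

Definition is_solution (k0 k : R) (w w1 : R -> R) (psi psi1 psi2 : R -> Cplx) : Prop :=
  (forall x, Cderiv_lim psi x (psi1 x)) /\
  (forall x, Cderiv_lim psi1 x (psi2 x)) /\
  (forall x, Cadd (Csub (RtoC 0) (psi2 x)) (Cmul (Upot k0 w w1 x) (psi x))
             = Cmul (RtoC (k ^ 2)) (psi x)).

From Pilot Require Import Defs.
From Stdlib Require Import Reals Lra.
From Coquelicot Require Import Rbar Hierarchy Complex.
Open Scope R_scope.

(* Put q = psi' + i w psi.  Since -d^2/dx^2 + U = (-d/dx + i w)(d/dx + i w) + k0^2, a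
   solution of -psi'' + U psi = k^2 psi gives a solution (psi, q) of the first order
   system  psi' = q - i w psi,  q' = i w q - E psi,  with E = k^2 - k0^2 and w real.
   For two solutions u = (psi, q) and v = (phi, r) of this system the sesquilinear form
   B(u,v) = E conj(psi) phi + conj(q) r and the Wronskian W(u,v) = phi q - r psi are
   constant, so they can be read off the plane waves at +oo, where w -> -k0.  With u the
   laser and v the CPA solution this gives B(u,u) = 2k(k-k0) rho^2, B(u,v) = 0 and
   W(u,v) = 2ik a_+ c_+.  The identity phi B(u,u) = conj(q) W(u,v) + psi B(u,v) then
   yields (k-k0)^2 |phi|^2 = |q|^2 at every point, and B(u,u) = E |psi|^2 + |q|^2 turns
   this into the claimed identity. *)

(* The pairs [Cplx] of Defs and their operations are definitionally those of
   Coquelicot's complex field [C]; rewriting with the equations below lets us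
   compute with [ring]. *)
Lemma Cadd_Cplus : Cadd = Cplus. Proof. reflexivity. Qed.
Lemma Csub_Cminus : Csub = Cminus. Proof. reflexivity. Qed.
Lemma Cmul_Cmult : Cmul = Cmult. Proof. reflexivity. Qed.
Lemma Defs_RtoC : Defs.RtoC = RtoC. Proof. reflexivity. Qed.

Section ComplexFacts.
Local Open Scope C_scope.

Lemma C_eq (z z' : C) : Re z = Re z' -> Im z = Im z' -> z = z'.
Proof. intros; now apply injective_projections. Qed.

Lemma Ci_sq : Ci * Ci = -1.
Proof. apply C_eq; simpl; ring. Qed.

Lemma Cconj_Ci : Cconj Ci = - Ci.
Proof. apply C_eq; simpl; ring. Qed.

Lemma Cconj_RtoC (r : R) : Cconj (RtoC r) = RtoC r.
Proof. apply C_eq; simpl; ring. Qed.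

Lemma Cconj_mul_self (z : C) : Cconj z * z = RtoC (Cnorm2 z).
Proof. apply C_eq; unfold Cnorm2, Cre, Cim; simpl; ring. Qed.

Lemma Cnorm2_mult (z z' : C) : Cnorm2 (z * z') = (Cnorm2 z * Cnorm2 z')%R.
Proof. unfold Cnorm2, Cre, Cim; simpl; ring. Qed.

Lemma Cnorm2_conj (z : C) : Cnorm2 (Cconj z) = Cnorm2 z.
Proof. unfold Cnorm2, Cre, Cim; simpl; ring. Qed.

Lemma Cnorm2_RtoC (r : R) : Cnorm2 (RtoC r) = (r ^ 2)%R.
Proof. unfold Cnorm2, Cre, Cim; simpl; ring. Qed.

Lemma Cnorm2_Ci : Cnorm2 Ci = 1%R.
Proof. unfold Cnorm2, Cre, Cim; simpl; ring. Qed.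

Lemma Cnorm2_Cnorm (z : C) : Cnorm2 z = (Cnorm z ^ 2)%R.
Proof.
  unfold Cnorm; rewrite pow2_sqrt; [reflexivity|].
  unfold Cnorm2; apply Rplus_le_le_0_compat; apply pow2_ge_0.
Qed.

Lemma Cnorm2_Cexpi (t : R) : Cnorm2 (Cexpi t) = 1%R.
Proof.
  pose proof (sin2_cos2 t) as H; unfold Rsqr in H.
  unfold Cnorm2, Cre, Cim, Cexpi; simpl; nra.
Qed.

Lemma Cmod_Cexpi (t : R) : Cmod (Cexpi t) = 1%R.
Proof. change (sqrt (Cnorm2 (Cexpi t)) = 1%R); rewrite Cnorm2_Cexpi; apply sqrt_1. Qed.

Lemma Cconj_Cexpi_mul (t : R) : Cconj (Cexpi t) * Cexpi t = 1.
Proof. rewrite Cconj_mul_self, Cnorm2_Cexpi; reflexivity. Qed.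

Lemma Cexpi_opp_mul (k x : R) : Cexpi (- k * x) * Cexpi (k * x) = 1.
Proof.
  replace (Cexpi (- k * x)) with (Cconj (Cexpi (k * x))); [apply Cconj_Cexpi_mul|].
  unfold Cexpi; rewrite <- Ropp_mult_distr_l, cos_neg, sin_neg; reflexivity.
Qed.

End ComplexFacts.

Ltac push_RtoC :=
  repeat progress rewrite ?RtoC_plus, ?RtoC_minus, ?RtoC_mult, ?RtoC_opp, ?RtoC_pow.
Ltac push_Cconj :=
  rewrite ?Cplus_conj, ?Cminus_conj, ?Cmult_conj, ?Copp_conj, ?Cconj_Ci, ?Cconj_RtoC.

Section ComplexDerivative.
Local Open Scope C_scope.

Lemma derivable_pt_lim_eq (f : R -> R) (x l l' : R) :
  derivable_pt_lim f x l -> l = l' -> derivable_pt_lim f x l'.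
Proof. intros H <-; exact H. Qed.

Lemma Cderiv_eq (f : R -> C) (x : R) (l l' : C) :
  Cderiv_lim f x l -> l = l' -> Cderiv_lim f x l'.
Proof. intros H <-; exact H. Qed.

Lemma Cderiv_const (c : C) (x : R) : Cderiv_lim (fun _ => c) x (RtoC 0).
Proof. split; apply derivable_pt_lim_const. Qed.

Lemma Cderiv_RtoC (f : R -> R) (x l : R) :
  derivable_pt_lim f x l -> Cderiv_lim (fun t => RtoC (f t)) x (RtoC l).
Proof. intros H; split; [exact H | apply derivable_pt_lim_const]. Qed.

Lemma Cderiv_plus (f g : R -> C) (x : R) (l m : C) :
  Cderiv_lim f x l -> Cderiv_lim g x m -> Cderiv_lim (fun t => f t + g t) x (l + m).
Proof. intros [Hf1 Hf2] [Hg1 Hg2]; split; now apply derivable_pt_lim_plus. Qed.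

Lemma Cderiv_minus (f g : R -> C) (x : R) (l m : C) :
  Cderiv_lim f x l -> Cderiv_lim g x m -> Cderiv_lim (fun t => f t - g t) x (l - m).
Proof.
  intros [Hf1 Hf2] [Hg1 Hg2]; split;
    (eapply derivable_pt_lim_eq; [apply derivable_pt_lim_plus;
       [eassumption | apply derivable_pt_lim_opp; eassumption] | reflexivity]).
Qed.

Lemma Cderiv_mult (f g : R -> C) (x : R) (l m : C) :
  Cderiv_lim f x l -> Cderiv_lim g x m ->
  Cderiv_lim (fun t => f t * g t) x (l * g x + f x * m).
Proof.
  intros [Hf1 Hf2] [Hg1 Hg2]; split; unfold Cre, Cim in *; simpl.
  - eapply derivable_pt_lim_eq;
      [apply derivable_pt_lim_minus; apply derivable_pt_lim_mult; eassumption |].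
    cbv beta; ring.
  - eapply derivable_pt_lim_eq;
      [apply derivable_pt_lim_plus; apply derivable_pt_lim_mult; eassumption |].
    cbv beta; ring.
Qed.

Lemma Cderiv_conj (f : R -> C) (x : R) (l : C) :
  Cderiv_lim f x l -> Cderiv_lim (fun t => Cconj (f t)) x (Cconj l).
Proof. intros [H1 H2]; split; [exact H1 | now apply derivable_pt_lim_opp]. Qed.

Lemma Cderiv_zero_constant (f : R -> C) :
  (forall x, Cderiv_lim f x (RtoC 0)) -> forall x y, f x = f y.
Proof.
  intros H x y.
  assert (Hconst : forall g : R -> R, (forall t, derivable_pt_lim g t 0) -> g x = g y).
  { intros g Hg.
    apply (null_derivative_1 g (fun t => exist _ 0 (Hg t))); reflexivity. }
  apply C_eq; [apply (Hconst (fun t => Re (f t))) | apply (Hconst (fun t => Im (f t)))];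
    intro t; apply (H t).
Qed.

End ComplexDerivative.

Ltac Cderiv_rules :=
  repeat first [ apply Cderiv_minus | apply Cderiv_plus | apply Cderiv_mult
               | apply Cderiv_conj | apply Cderiv_const | eassumption ].

Section AsymptoticsAtPinf.
Local Open Scope C_scope.

Local Notation at_pinf := (Rbar_locally p_infty).

Definition bounded_pinf (g : R -> C) : Prop :=
  exists B, at_pinf (fun x => (Cmod (g x) <= B)%R).

(* Requiring the comparison function to be bounded makes the relation stable under
   products. *)
Definition approx_pinf (f g : R -> C) : Prop :=
  Czero_pinf (fun x => f x - g x) /\ bounded_pinf g.

Lemma Czero_pinf_ext (f g : R -> C) :
  (forall x, f x = g x) -> Czero_pinf f -> Czero_pinf g.
Proof.
  intros E H eps Heps; destruct (H eps Heps) as [M HM].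
  exists M; intros x Hx; rewrite <- E; auto.
Qed.

Lemma Czero_pinf_bounded (f : R -> C) : Czero_pinf f -> bounded_pinf f.
Proof.
  intros H; exists 1%R; apply (filter_imp (F := at_pinf) (fun x => (Cmod (f x) < 1)%R)).
  - intros x; apply Rlt_le.
  - apply H, Rlt_0_1.
Qed.

Lemma Czero_pinf_plus (f g : R -> C) :
  Czero_pinf f -> Czero_pinf g -> Czero_pinf (fun x => f x + g x).
Proof.
  intros Hf Hg eps Heps.
  assert (Heps2 : (0 < eps / 2)%R) by lra.
  apply (filter_imp (F := at_pinf) (fun x => Cmod (f x) < eps / 2 /\ Cmod (g x) < eps / 2)%R).
  - intros x [H1 H2]; eapply Rle_lt_trans; [apply Cmod_triangle | lra].
  - apply filter_and; [apply Hf | apply Hg]; exact Heps2.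
Qed.

Lemma Czero_pinf_mult (f g : R -> C) :
  Czero_pinf f -> bounded_pinf g -> Czero_pinf (fun x => f x * g x).
Proof.
  intros Hf [B HB] eps Heps.
  assert (HB1 : (0 < Rabs B + 1)%R) by (pose proof (Rabs_pos B); lra).
  apply (filter_imp (F := at_pinf)
           (fun x => Cmod (f x) < eps / (Rabs B + 1) /\ Cmod (g x) <= B)%R).
  - intros x [H1 H2]; rewrite Cmod_mult.
    assert (Hg : (Cmod (g x) <= Rabs B + 1)%R) by (pose proof (Rle_abs B); lra).
    assert (Hdiv : (eps / (Rabs B + 1) * (Rabs B + 1) = eps)%R) by (field; lra).
    pose proof (Cmod_ge_0 (f x)); pose proof (Cmod_ge_0 (g x)); nra.
  - apply filter_and; [apply Hf, Rdiv_lt_0_compat; assumption | exact HB].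
Qed.

Lemma Czero_pinf_conj (f : R -> C) :
  Czero_pinf f -> Czero_pinf (fun x => Cconj (f x)).
Proof.
  intros H eps Heps; destruct (H eps Heps) as [M HM].
  exists M; intros x Hx; change (Cmod (Cconj (f x)) < eps)%R; rewrite Cmod_conj; auto.
Qed.

Lemma bounded_pinf_ext (f g : R -> C) :
  (forall x, f x = g x) -> bounded_pinf f -> bounded_pinf g.
Proof.
  intros E [B HB]; exists B.
  apply (filter_imp (F := at_pinf) (fun x => Cmod (f x) <= B)%R);
    [intro x; rewrite E |]; auto.
Qed.

Lemma bounded_pinf_const (c : C) : bounded_pinf (fun _ => c).
Proof. exists (Cmod c); exists 0%R; intros; apply Rle_refl. Qed.

Lemma bounded_pinf_plus (f g : R -> C) :
  bounded_pinf f -> bounded_pinf g -> bounded_pinf (fun x => f x + g x).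
Proof.
  intros [B1 H1] [B2 H2]; exists (B1 + B2)%R.
  apply (filter_imp (F := at_pinf) (fun x => Cmod (f x) <= B1 /\ Cmod (g x) <= B2)%R).
  - intros x [Hf Hg]; eapply Rle_trans; [apply Cmod_triangle | lra].
  - apply filter_and; assumption.
Qed.

Lemma bounded_pinf_mult (f g : R -> C) :
  bounded_pinf f -> bounded_pinf g -> bounded_pinf (fun x => f x * g x).
Proof.
  intros [B1 H1] [B2 H2]; exists (B1 * B2)%R.
  apply (filter_imp (F := at_pinf) (fun x => Cmod (f x) <= B1 /\ Cmod (g x) <= B2)%R).
  - intros x [Hf Hg]; rewrite Cmod_mult.
    apply Rmult_le_compat; auto using Cmod_ge_0.
  - apply filter_and; assumption.
Qed.

Lemma bounded_pinf_plane_wave (a : C) (k : R) :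
  bounded_pinf (fun x => a * Cexpi (k * x)).
Proof.
  exists (Cmod a); exists 0%R; intros x _.
  rewrite Cmod_mult, Cmod_Cexpi, Rmult_1_r; apply Rle_refl.
Qed.

Lemma approx_pinf_eq (f g h : R -> C) :
  approx_pinf f g -> (forall x, g x = h x) -> approx_pinf f h.
Proof.
  intros [Hz Hb] E; split.
  - apply (Czero_pinf_ext (fun x => f x - g x)); [intro x; rewrite E |]; auto.
  - exact (bounded_pinf_ext g h E Hb).
Qed.

Lemma approx_pinf_const (c : C) : approx_pinf (fun _ => c) (fun _ => c).
Proof.
  split; [| apply bounded_pinf_const].
  intros eps Heps; exists 0%R; intros x _.
  change (Cmod (c - c) < eps)%R; replace (c - c) with (RtoC 0) by ring.
  rewrite Cmod_0; exact Heps.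
Qed.

Lemma approx_pinf_plus (f g f' g' : R -> C) :
  approx_pinf f f' -> approx_pinf g g' ->
  approx_pinf (fun x => f x + g x) (fun x => f' x + g' x).
Proof.
  intros [Hf Bf] [Hg Bg]; split; [| now apply bounded_pinf_plus].
  apply (Czero_pinf_ext (fun x => (f x - f' x) + (g x - g' x))); [intro x; ring |].
  now apply Czero_pinf_plus.
Qed.

Lemma approx_pinf_mult (f g f' g' : R -> C) :
  approx_pinf f f' -> approx_pinf g g' ->
  approx_pinf (fun x => f x * g x) (fun x => f' x * g' x).
Proof.
  intros [Hf Bf] [Hg Bg]; split; [| now apply bounded_pinf_mult].
  apply (Czero_pinf_ext
    (fun x => (f x - f' x) * (g x - g' x) + (f x - f' x) * g' x + (g x - g' x) * f' x));
    [intro x; ring |].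
  repeat apply Czero_pinf_plus; apply Czero_pinf_mult; auto using Czero_pinf_bounded.
Qed.

Lemma approx_pinf_minus (f g f' g' : R -> C) :
  approx_pinf f f' -> approx_pinf g g' ->
  approx_pinf (fun x => f x - g x) (fun x => f' x - g' x).
Proof.
  intros [Hf Bf] [Hg Bg]; split.
  - apply (Czero_pinf_ext (fun x => (f x - f' x) + (g x - g' x) * (-1)));
      [intro x; ring |].
    apply Czero_pinf_plus; [| apply Czero_pinf_mult; [| apply bounded_pinf_const]];
      assumption.
  - apply (bounded_pinf_ext (fun x => f' x + g' x * (-1))); [intro x; ring |].
    apply bounded_pinf_plus; [| apply bounded_pinf_mult; [| apply bounded_pinf_const]];
      assumption.
Qed.

Lemma approx_pinf_conj (f f' : R -> C) :
  approx_pinf f f' -> approx_pinf (fun x => Cconj (f x)) (fun x => Cconj (f' x)).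
Proof.
  intros [Hf [B HB]]; split.
  - apply (Czero_pinf_ext (fun x => Cconj (f x - f' x))); [intro x; apply Cminus_conj |].
    now apply Czero_pinf_conj.
  - exists B; apply (filter_imp (F := at_pinf) (fun x => Cmod (f' x) <= B)%R);
      [intro x; rewrite <- (Cmod_conj (f' x)) |]; auto.
Qed.

Lemma approx_pinf_constant_eq (f : R -> C) (c : C) :
  (forall x y, f x = f y) -> approx_pinf f (fun _ => c) -> forall x, f x = c.
Proof.
  intros Hconst [Hz _] x.
  destruct (Rlt_or_le 0 (Cmod (f x - c))) as [Hpos | Hle].
  - destruct (Hz _ Hpos) as [M HM].
    specialize (HM (M + 1)%R ltac:(lra)).
    change (Cmod (f (M + 1)%R - c) < Cmod (f x - c))%R in HM.
    rewrite (Hconst (M + 1)%R x) in HM; lra.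
  - apply Ceq_minus, Cmod_eq_0, Rle_antisym; [exact Hle | apply Cmod_ge_0].
Qed.

Lemma asym_pinf_approx (f f' : R -> C) (a : C) (k : R) :
  asym_pinf f f' a k ->
  approx_pinf f (fun x => a * Cexpi (k * x)) /\
  approx_pinf f' (fun x => Ci * k * (a * Cexpi (k * x))).
Proof.
  intros [H H']; split; split; try assumption.
  - apply bounded_pinf_plane_wave.
  - apply (bounded_pinf_mult (fun _ => Ci * k));
      [apply bounded_pinf_const | apply bounded_pinf_plane_wave].
Qed.

Lemma Rlim_pinf_approx (w : R -> R) (l : R) :
  Rlim_pinf w l -> approx_pinf (fun x => RtoC (w x)) (fun _ => RtoC l).
Proof.
  intros H; split; [| apply bounded_pinf_const].
  intros eps Heps; destruct (H eps Heps) as [M HM].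
  exists M; intros x Hx; change (Cmod (RtoC (w x) - RtoC l) < eps)%R.
  rewrite <- RtoC_minus, Cmod_R; auto.
Qed.

End AsymptoticsAtPinf.

Section CompanionSystem.
Local Open Scope C_scope.

Definition partner (w : R -> R) (psi psi1 : R -> C) (x : R) : C :=
  psi1 x + Ci * w x * psi x.

Definition companion_system (w : R -> R) (E : R) (psi q : R -> C) : Prop :=
  forall x, Cderiv_lim psi x (q x - Ci * w x * psi x) /\
            Cderiv_lim q x (Ci * w x * q x - E * psi x).

Lemma Upot_eq (k0 : R) (w w1 : R -> R) (x : R) :
  Upot k0 w w1 x = RtoC (k0 ^ 2 - w x ^ 2)%R - Ci * w1 x.
Proof. apply C_eq; simpl; ring. Qed.

Lemma solution_companion_system (k0 k : R) (w w1 : R -> R) (psi psi1 psi2 : R -> C) :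
  (forall x, derivable_pt_lim w x (w1 x)) ->
  is_solution k0 k w w1 psi psi1 psi2 ->
  companion_system w (k ^ 2 - k0 ^ 2)%R psi (partner w psi psi1).
Proof.
  intros Hw [D1 [D2 Heq]] x; split.
  - eapply Cderiv_eq; [apply D1 | unfold partner; ring].
  - unfold partner; eapply Cderiv_eq.
    + apply Cderiv_plus; [apply D2 | apply Cderiv_mult; [| apply D1]].
      apply Cderiv_mult; [apply Cderiv_const | apply Cderiv_RtoC, Hw].
    + specialize (Heq x).
      rewrite Cadd_Cplus, Csub_Cminus, Cmul_Cmult, Defs_RtoC, Upot_eq in Heq.
      assert (Hpsi2 : psi2 x = (RtoC (k0 ^ 2 - w x ^ 2)%R - Ci * w1 x) * psi x
                               - RtoC (k ^ 2)%R * psi x)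
        by (rewrite <- Heq; ring).
      rewrite Hpsi2, !RtoC_minus, !RtoC_pow; ring [Ci_sq].
Qed.

Definition pairing (E : R) (psi q phi r : C) : C := E * Cconj psi * phi + Cconj q * r.

Definition wronskian (psi q phi r : C) : C := phi * q - r * psi.

Section Conservation.
Variables (w : R -> R) (E : R) (psi q phi r : R -> C).
Hypotheses (Hu : companion_system w E psi q) (Hv : companion_system w E phi r).

Lemma pairing_conserved (x y : R) :
  pairing E (psi x) (q x) (phi x) (r x) = pairing E (psi y) (q y) (phi y) (r y).
Proof.
  apply (Cderiv_zero_constant (fun t => pairing E (psi t) (q t) (phi t) (r t))).
  intro t; destruct (Hu t) as [D1 D2], (Hv t) as [D3 D4]; unfold pairing.
  eapply Cderiv_eq; [Cderiv_rules | push_Cconj; ring [Ci_sq]].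
Qed.

Lemma wronskian_conserved (x y : R) :
  wronskian (psi x) (q x) (phi x) (r x) = wronskian (psi y) (q y) (phi y) (r y).
Proof.
  apply (Cderiv_zero_constant (fun t => wronskian (psi t) (q t) (phi t) (r t))).
  intro t; destruct (Hu t) as [D1 D2], (Hv t) as [D3 D4]; unfold wronskian.
  eapply Cderiv_eq; [Cderiv_rules | ring].
Qed.

End Conservation.

Lemma pairing_self (E : R) (psi q : C) :
  pairing E psi q psi q = RtoC (E * Cnorm2 psi + Cnorm2 q)%R.
Proof. unfold pairing; rewrite RtoC_plus, RtoC_mult, <- !Cconj_mul_self; ring. Qed.

Lemma pairing_wronskian_identity (E : R) (psi q phi r : C) :
  phi * pairing E psi q psi q
  = Cconj q * wronskian psi q phi r + psi * pairing E psi q phi r.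
Proof. unfold pairing, wronskian; ring. Qed.

Lemma norms_of_invariants (E beta : R) (omega psi q phi r : C) :
  pairing E psi q psi q = RtoC beta -> pairing E psi q phi r = RtoC 0 ->
  wronskian psi q phi r = omega ->
  (E * Cnorm2 psi + Cnorm2 q = beta)%R /\
  (Cnorm2 phi * beta ^ 2 = Cnorm2 q * Cnorm2 omega)%R.
Proof.
  intros HB HS HW; split.
  - apply RtoC_inj; rewrite <- pairing_self; exact HB.
  - rewrite <- Cnorm2_RtoC, <- Cnorm2_mult, <- HB.
    rewrite (pairing_wronskian_identity E psi q phi r), HS, HW.
    replace (Cconj q * omega + psi * RtoC 0) with (Cconj q * omega) by ring.
    rewrite Cnorm2_mult, Cnorm2_conj; reflexivity.
Qed.

End CompanionSystem.

Ltac approx_rules :=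
  repeat first [ apply approx_pinf_minus | apply approx_pinf_plus | apply approx_pinf_mult
               | apply approx_pinf_conj | apply approx_pinf_const | eassumption ].

Lemma partner_approx (w : R -> R) (l : R) (psi psi1 : R -> C) (a : C) (k : R) :
  asym_pinf psi psi1 a k -> Rlim_pinf w l ->
  approx_pinf (partner w psi psi1) (fun x => (Ci * (k + l)%R * (a * Cexpi (k * x)))%C).
Proof.
  intros Hpsi Hw; apply asym_pinf_approx in Hpsi as [H0 H1]; apply Rlim_pinf_approx in Hw.
  eapply approx_pinf_eq; [unfold partner; approx_rules |].
  intro x; cbv beta; rewrite RtoC_plus; ring.
Qed.

Lemma balance_of_invariant_values (k k0 rho P S Q : R) :
  k <> 0 -> k <> k0 -> 0 < rho ->
  (k ^ 2 - k0 ^ 2) * P + Q = 2 * k * (k - k0) * rho ^ 2 ->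
  S * (2 * k * (k - k0) * rho ^ 2) ^ 2 = Q * ((2 * k) ^ 2 * rho ^ 2 * rho ^ 2) ->
  S + P + k0 / k * (P - S) = 2 * rho ^ 2.
Proof.
  intros Hk Hkk0 Hrho HB HW.
  assert (HS : S * (k - k0) ^ 2 = Q).
  { apply (Rmult_eq_reg_r ((2 * k) ^ 2 * rho ^ 2 * rho ^ 2)).
    - rewrite <- HW; ring.
    - repeat apply Rmult_integral_contrapositive_currified; try apply pow_nonzero; lra. }
  apply (Rmult_eq_reg_l (k * (k - k0))).
  - field_simplify; [nra | exact Hk].
  - apply Rmult_integral_contrapositive_currified; lra.
Qed.

Section PlaneWaves.
Local Open Scope C_scope.

Variables (k k0 rho : R) (w : R -> R) (psi q phi r : R -> C) (a c : C).
Hypotheses (Hk : k <> 0%R) (Hkk0 : k <> k0) (Hrho : (0 < rho)%R)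
  (Ha : Cnorm a = rho) (Hc : Cnorm c = rho).
Hypotheses (Hu : companion_system w (k ^ 2 - k0 ^ 2)%R psi q)
  (Hv : companion_system w (k ^ 2 - k0 ^ 2)%R phi r).
Hypotheses (Hpsi : approx_pinf psi (fun x => a * Cexpi (k * x)))
  (Hq : approx_pinf q (fun x => Ci * (k + - k0)%R * (a * Cexpi (k * x))))
  (Hphi : approx_pinf phi (fun x => c * Cexpi (- k * x)))
  (Hr : approx_pinf r (fun x => Ci * (- k + - k0)%R * (c * Cexpi (- k * x)))).

Let E := (k ^ 2 - k0 ^ 2)%R.

Lemma pairing_self_value (x : R) :
  pairing E (psi x) (q x) (psi x) (q x) = RtoC (2 * k * (k - k0) * rho ^ 2)%R.
Proof.
  apply (approx_pinf_constant_eq (fun t => pairing E (psi t) (q t) (psi t) (q t)));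
    [intros; apply pairing_conserved with w; assumption |].
  eapply approx_pinf_eq; [unfold pairing; approx_rules | intro t; cbv beta].
  rewrite <- Ha, <- Cnorm2_Cnorm; unfold E.
  push_Cconj; push_RtoC.
  ring [Ci_sq (Cconj_Cexpi_mul (k * t)) (Cconj_mul_self a)].
Qed.

Lemma pairing_cross_value (x : R) :
  pairing E (psi x) (q x) (phi x) (r x) = RtoC 0.
Proof.
  apply (approx_pinf_constant_eq (fun t => pairing E (psi t) (q t) (phi t) (r t)));
    [intros; apply pairing_conserved with w; assumption |].
  eapply approx_pinf_eq; [unfold pairing; approx_rules | intro t; cbv beta].
  unfold E; push_Cconj; push_RtoC; ring [Ci_sq].
Qed.

Lemma wronskian_value (x : R) :
  wronskian (psi x) (q x) (phi x) (r x) = RtoC (2 * k) * Ci * a * c.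
Proof.
  apply (approx_pinf_constant_eq (fun t => wronskian (psi t) (q t) (phi t) (r t)));
    [intros; apply wronskian_conserved with w E; assumption |].
  eapply approx_pinf_eq; [unfold wronskian; approx_rules | intro t; cbv beta].
  push_RtoC; rewrite <- (Cmult_1_r (_ * Ci * a * c)), <- (Cexpi_opp_mul k t); ring.
Qed.

Lemma plane_wave_norm_balance (x : R) :
  (Cnorm2 (phi x) + Cnorm2 (psi x) + k0 / k * (Cnorm2 (psi x) - Cnorm2 (phi x))
   = 2 * rho ^ 2)%R.
Proof.
  destruct (norms_of_invariants _ _ _ _ _ _ _
              (pairing_self_value x) (pairing_cross_value x) (wronskian_value x))
    as [HB HW].
  rewrite !Cnorm2_mult, Cnorm2_Ci, Cnorm2_RtoC, (Cnorm2_Cnorm a), (Cnorm2_Cnorm c),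
    Ha, Hc, Rmult_1_r in HW.
  exact (balance_of_invariant_values k k0 rho _ _ _ Hk Hkk0 Hrho HB HW).
Qed.

End PlaneWaves.

Theorem mainTheorem7
  (k0 : R) (w w1 w2 : R -> R)
  (Hw1 : forall x, derivable_pt_lim w x (w1 x))
  (Hw2 : forall x, derivable_pt_lim w1 x (w2 x))
  (Hw2c : continuity w2)
  (Hwp : Rlim_pinf w (- k0)) (Hwm : Rlim_minf w k0)
  (Hw1p : Rlim_pinf w1 0) (Hw1m : Rlim_minf w1 0)
  (kst rho : R)
  (Hk0 : kst <> 0) (Hk1 : kst <> k0) (Hk2 : kst <> - k0)
  (Hrho : 0 < rho)
  (las las1 las2 cpa cpa1 cpa2 : R -> Cplx)
  (ap am cp cm : Cplx)
  (Hlas : is_solution k0 kst w w1 las las1 las2)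
  (Hcpa : is_solution k0 kst w w1 cpa cpa1 cpa2)
  (Hlasp : asym_pinf las las1 ap kst) (Hlasm : asym_minf las las1 am (- kst))
  (Hcpap : asym_pinf cpa cpa1 cp (- kst)) (Hcpam : asym_minf cpa cpa1 cm kst)
  (Hap : Cnorm ap = rho) (Ham : Cnorm am = rho)
  (Hcp : Cnorm cp = rho) (Hcm : Cnorm cm = rho) :
  forall x : R,
    Cnorm2 (cpa x) + Cnorm2 (las x)
      + k0 / kst * (Cnorm2 (las x) - Cnorm2 (cpa x)) = 2 * rho ^ 2.
Proof.
  apply (plane_wave_norm_balance kst k0 rho w
           las (partner w las las1) cpa (partner w cpa cpa1) ap cp); try assumption.
  - exact (solution_companion_system _ _ _ _ _ _ _ Hw1 Hlas).
  - exact (solution_companion_system _ _ _ _ _ _ _ Hw1 Hcpa).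
  - exact (proj1 (asym_pinf_approx _ _ _ _ Hlasp)).
  - exact (partner_approx _ _ _ _ _ _ Hlasp Hwp).
  - exact (proj1 (asym_pinf_approx _ _ _ _ Hcpap)).
  - exact (partner_approx _ _ _ _ _ _ Hcpap Hwp).
Qed.
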